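(* Let $t\in\mathbb Z$ and $k\ge0$, and let $W_t(|t|+2k)$ be the cell module of ${\mathbb{TLB}}_{|t|+2k}(q,Q)$ indexed by $t$. Then $$\dim W_t(|t|+2k)=\binom{|t|+2k}{k}.$$
   Context: Temperley–Lieb diagrams $t\to s$ have $t$ bottom and $s$ top points of a rectangle joined in pairs by non-crossing arcs; the leftmost region is the region adjacent to the left edge; marked diagrams may carry at most one mark (dot) on each arc bounding the leftmost region. ${\mathbb{TLB}}_n(q,Q)$ is the algebra with basis the marked diagrams $n\to n$ (no loops), multiplied by concatenation with the rules: unmarked loop $\mapsto -(q+q^{-1})$, loop with one mark $\mapsto \frac qQ+\frac Qq$, an arc with two marks equals $-(Q+Q^{-1})$ times the arc with one mark. For $t\in\Lambda_B(n)=\{t: |t|\le n,\ t\equiv n\pmod 2\}$, the cell module $W_t(n)$ (for the cellular basis $C^t_{S,T}$ given by $D_2^*D_1$ for $t\ge0$ and $D_2^*(C_0\otimes I^{\otimes(|t|-1)})D_1$ for $t<0$) is the free module with basis the set $M(t)$ of monic diagrams $|t|\to n$ (i.e. with $|t|$ through strings) in which no through string is marked, with the induced action of ${\mathbb{TLB}}_n(q,Q)$. Here $C_0$ is a marked vertical strand, $I$ an unmarked one, $D^*$ the horizontal reflection of $D$. *)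

From HB Require Import structures.
From mathcomp Require Import all_boot all_order all_fingroup all_algebra.
Set Implicit Arguments. Unset Strict Implicit. Unset Printing Implicit Defensive.
Import GRing.Theory.

(* Monic marked TL diagrams  a -> n  (a = |t| through strings) in which no
   through string is marked, encoded by their top boundary:
   - p : involution of the n top points; p i = i  iff  i is the top end of a
     through string, otherwise {i, p i} is a cap (arc joining two top points);
     the a bottom points are joined, in order, to the a fixed points of p, so
     the diagram is determined by p;
   - noncrossing: if i < l < p i then l lies on a cap nested inside {i, p i}
     (so caps do not cross and no through string passes under a cap);
   - m : set of left endpoints of the marked caps.  A cap {i, p i} (i < p i)
     bounds the leftmost region iff it is not nested in another cap and lies
     to the left of every through string; only such caps may carry a mark,
     and at most one each (a set of caps). *)
Definition monic_marked (a n : nat) (x : {perm 'I_n} * {set 'I_n}) : bool :=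
  let p := x.1 in let m := x.2 in
  [&& [forall i : 'I_n, p (p i) == i],
      #|[set i | p i == i]| == a,
      [forall i : 'I_n, forall l : 'I_n, ((i < l)%N && (l < p i)%N) ==>
                            [&& p l != l, (i < p l)%N & (p l < p i)%N]]
    & [forall i in m,
        [&& (i < p i)%N,
            [forall j : 'I_n, ~~ ((j < i)%N && (i < p j)%N)]
          & [forall l : 'I_n, (p l == l) ==> (i < l)%N]]]].

Arguments monic_marked a n x : clear implicits.

Definition Mt (t : int) (n : nat) : finType :=
  {x : {perm 'I_n} * {set 'I_n} | monic_marked (absz t) n x}.

(* The cell module W_t(n) as a K-vector space: free with basis M(t)
   (the TLB_n(q,Q)-action does not affect the dimension). *)
Definition cellW (K : fieldType) (t : int) (n : nat) : vectType K :=
  {ffun Mt t n -> K^o}.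

(* A monic diagram whose through strings are unmarked is determined by its top
   boundary: an involution of the n top points, whose fixed points are the
   through strings, together with the set of marked caps.  Removing the last
   point gives a recursion on n.  If it is a through string, what remains is a
   diagram with one through string fewer.  Otherwise it closes a cap {j, n},
   and removing it turns j into the rightmost through string; this cap can be
   marked only when there are no through strings at all, since a marked cap
   lies to the left of every through string and nothing lies to the right of
   a cap ending at n.  Conversely, by noncrossing, a new last point can only
   be capped to the rightmost through string.  Hence the number N(a, n) of
   diagrams with a through strings satisfies
     N(0, n + 1) = 2 N(1, n)   and   N(a + 1, n + 1) = N(a, n) + N(a + 2, n),
   which is Pascal's rule for N(a, a + 2k) = C(a + 2k, k). *)

From HB Require Import structures.
From mathcomp Require Import all_boot all_order all_fingroup all_algebra.
From mathcomp Require Import zify.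
Set Implicit Arguments. Unset Strict Implicit. Unset Printing Implicit Defensive.

Lemma card_in_bij (T1 T2 : finType) (A : {set T1}) (B : {set T2})
    (f : T1 -> T2) (g : T2 -> T1) :
  {in A, forall x, f x \in B} -> {in B, forall y, g y \in A} ->
  {in A, cancel f g} -> {in B, cancel g f} -> #|A| = #|B|.
Proof.
move=> fAB gBA fK gK; rewrite -(card_in_imset (can_in_inj fK)).
apply: eq_card => y; apply/imsetP/idP => [[x xA ->] | yB]; first exact: fAB.
by exists (g y); [apply: gBA | rewrite gK].
Qed.

Definition fixcount n (f : nat -> nat) := count (fun i => f i == i) (iota 0 n).

Lemma fixcountS n f : fixcount n.+1 f = fixcount n f + (f n == n).
Proof. by rewrite /fixcount -addn1 iotaD count_cat /= addn0. Qed.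

Lemma eq_fixcount n f g : (forall i, i < n -> f i = g i) -> fixcount n f = fixcount n g.
Proof. by move=> fg; apply: eq_in_count => i; rewrite mem_iota => /fg ->. Qed.

Lemma fixcount_le n f : fixcount n f <= n.
Proof. by rewrite -[leqRHS](size_iota 0) count_size. Qed.

Lemma fixcount_eq0P n f : reflect (forall i, i < n -> f i <> i) (fixcount n f == 0).
Proof.
rewrite -leqn0 leqNgt -has_count; apply: (iffP hasPn) => [nfix i lt_in | nfix i].
  by move/eqP; apply/negP/nfix; rewrite mem_iota.
by rewrite mem_iota => /nfix /eqP.
Qed.

Lemma fixcount_unfix n f g j : j < n -> (forall i, i < n -> i <> j -> f i = g i) ->
  f j = j -> g j <> j -> fixcount n f = (fixcount n g).+1.
Proof.
elim: n => [|n IHn] // lt_jn fg fj gj; rewrite !fixcountS.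
have [lt_jn'|ejn] : j < n \/ j = n by lia.
  rewrite (IHn lt_jn') // => [|i lt_in]; last by apply: fg; lia.
  by rewrite fg //; lia.
subst j.
rewrite (@eq_fixcount n f g) => [|i lt_in]; last by apply: fg; lia.
by rewrite fj eqxx; case: eqP => //; lia.
Qed.

Fixpoint last_fixed n (f : nat -> nat) :=
  if n is n'.+1 then (if f n' == n' then n' else last_fixed n' f) else 0.

Lemma last_fixedP n f : 0 < fixcount n f ->
  [/\ last_fixed n f < n, f (last_fixed n f) = last_fixed n f
    & forall l, last_fixed n f < l < n -> f l <> l].
Proof.
elim: n => [|n IHn] //=; rewrite fixcountS; case: eqP => [fn _ | nfn].
  by split=> //; lia.
rewrite addn0 => /IHn [lt_jn fj jlast]; split=> // [|l lt_jl]; first lia.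
have [lt_ln|-> //] : l < n \/ l = n by lia.
by apply: jlast; lia.
Qed.

Lemma last_fixed_eq n f j : j < n -> f j = j -> (forall l, j < l < n -> f l <> l) ->
  last_fixed n f = j.
Proof.
elim: n => [|n IHn] //= lt_jn fj jlast.
have [lt_jn'|ejn] : j < n \/ j = n by lia.
  case: eqP => [fn|_]; first by exfalso; apply: (jlast n) => //; lia.
  by apply: IHn => // l ?; apply: jlast; lia.
by rewrite -ejn fj eqxx.
Qed.

Lemma eq_last_fixed n f g : (forall i, i < n -> f i = g i) -> last_fixed n f = last_fixed n g.
Proof. by elim: n => [|n IHn] //= fg; rewrite fg // IHn // => i ?; apply: fg; lia. Qed.

(* The top involution is extended by the identity beyond n, so that it is an
   involution of nat and no range side conditions are needed. *)
Definition fixed_beyond n (f : nat -> nat) := forall i, n <= i -> f i = i.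

Definition noncrossing (f : nat -> nat) :=
  forall i l, i < l -> l < f i -> [/\ f l <> l, i < f l & f l < f i].

Definition leftmost_marks (f : nat -> nat) (mk : nat -> bool) := forall i, mk i ->
  [/\ i < f i, forall j, ~ (j < i < f j) & forall l, f l = l -> i < l].

Definition diagram a n f mk :=
  [/\ involutive f, fixed_beyond n f, fixcount n f = a, noncrossing f & leftmost_marks f mk].

Lemma fixed_beyond_lt n f i : involutive f -> fixed_beyond n f -> i < n -> f i < n.
Proof.
move=> fK fn lt_in; rewrite ltnNge; apply/negP => le_nfi.
by have := fK i; rewrite fn //; lia.
Qed.

Lemma eq_diagram a n f g mk mk' : f =1 g -> mk =1 mk' ->
  diagram a n f mk -> diagram a n g mk'.
Proof.
move=> fg mkE [fK fn fc nc lm]; split.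
- by move=> i; rewrite -!fg.
- by move=> i; rewrite -fg; apply: fn.
- by rewrite -(@eq_fixcount n f g).
- by move=> i l; rewrite -!fg; apply: nc.
- move=> i; rewrite -mkE -!fg => /lm [lt_ifi jP lP].
  by split=> // [j|l]; rewrite -fg //; apply: lP.
Qed.

Lemma diagram_marked_lt a n f mk i : diagram a n f mk -> mk i -> i < n.
Proof.
case=> _ fn _ _ lm /lm [lt_ifi _ _]; rewrite ltnNge; apply/negP => /fn; lia.
Qed.

Lemma diagram_unmarked_fixed a n f mk i : diagram a n f mk -> f i = i -> ~~ mk i.
Proof. by case=> _ _ _ _ lm fi; apply/negP => /lm [+ _ _]; rewrite fi ltnn. Qed.

Lemma diagram_widen a n f mk : diagram a n f mk -> diagram a.+1 n.+1 f mk.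
Proof.
case=> fK fn fc nc lm; split=> // [i lt_ni|]; first by apply: fn; lia.
by rewrite fixcountS fn // eqxx fc addn1.
Qed.

Lemma diagram_narrow a n f mk : diagram a n.+1 f mk -> f n = n -> 0 < a /\ diagram a.-1 n f mk.
Proof.
case=> fK fn fc nc lm fnn; rewrite -fc fixcountS fnn eqxx addn1; split=> //; split=> // i le_ni.
have [-> //|?] : i = n \/ n < i by lia.
by apply: fn.
Qed.

(** * The cap at the last point *)

Definition add_cap n (f : nat -> nat) j i := if i == n then j else if i == j then n else f i.

Definition add_mark j (b : bool) (mk : nat -> bool) i := mk i || b && (i == j).

Lemma add_cap_last n f j : add_cap n f j n = j.
Proof. by rewrite /add_cap eqxx. Qed.

Lemma involutive_add_cap n f j : involutive f -> f n = n -> f j = j -> involutive (add_cap n f j).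
Proof.
move=> fK fn fj i; rewrite /add_cap.
have [->|ni] := eqVneq i n; first by rewrite eqxx; case: eqVneq.
have [->|ji] := eqVneq i j; first by rewrite eqxx.
have [fin|_] := eqVneq (f i) n; first by move: ni; rewrite -(fK i) fin fn eqxx.
have [fij|_] := eqVneq (f i) j; first by move: ji; rewrite -(fK i) fij fj eqxx.
by rewrite fK.
Qed.

Lemma fixed_beyond_add_cap n f j : fixed_beyond n f -> j < n -> fixed_beyond n.+1 (add_cap n f j).
Proof. by move=> fn lt_jn i lt_ni; rewrite /add_cap !ifN_eq ?fn //; lia. Qed.

Lemma fixcount_add_cap n f j : j < n -> f j = j ->
  fixcount n f = (fixcount n.+1 (add_cap n f j)).+1.
Proof.
move=> lt_jn fj; rewrite fixcountS add_cap_last (ltn_eqF lt_jn) addn0.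
apply: (fixcount_unfix lt_jn) => // [i lt_in /eqP ij|]; rewrite /add_cap ?eqxx.
  by rewrite (ifN_eq _ _ ij) ifN_eq //; lia.
by rewrite ifN_eq //; lia.
Qed.

Lemma noncrossing_add_cap n f j : involutive f -> fixed_beyond n f -> noncrossing f ->
  j < n -> f j = j -> (forall l, j < l < n -> f l <> l) -> noncrossing (add_cap n f j).
Proof.
move=> fK fn nc lt_jn fj jlast i l lt_il; rewrite /add_cap.
have [ein|ni] := eqVneq i n; first by move=> ?; lia.
have [eij|ji] := eqVneq i j => [lt_ln | lt_lfi]; first subst i.
  have lt_fln : f l < n by apply: fixed_beyond_lt.
  have lt_jfl : j < f l.
    rewrite ltnNge leq_eqVlt; apply/negP => /orP [/eqP flj | lt_flj].
      by move: lt_il; rewrite -(fK l) flj fj ltnn.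
    by have [] := nc (f l) j lt_flj; rewrite ?fK ?fj.
  by rewrite !ifN_eq; [split=> //; apply: jlast; lia | lia | lia].
have lt_in : i < n by rewrite ltnNge; apply/negP => /fn fi; lia.
have lt_fin : f i < n by apply: fixed_beyond_lt.
have [nfl lt_ifl lt_flfi] := nc i l lt_il lt_lfi.
by rewrite !ifN_eq //; [apply/eqP => lj; apply: nfl; rewrite lj | lia].
Qed.

Lemma leftmost_marks_add_cap n f mk j (b : bool) : noncrossing f -> leftmost_marks f mk ->
  j < n -> f j = j -> (b -> forall l, l < n -> f l = l -> l = j) ->
  leftmost_marks (add_cap n f j) (add_mark j b mk).
Proof.
move=> nc lm lt_jn fj jonly i /orP [/lm [lt_ifi noin fixl] | /andP [/jonly {}jonly /eqP ->]].
  have lt_ij : i < j by apply: fixl.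
  rewrite /add_cap !ifN_eq; try lia; split=> // [j' | l].
    have [-> | _] := eqVneq j' n; first lia.
    by have [-> | _] := eqVneq j' j; [lia | apply: noin].
  have [-> | _] := eqVneq l n; first lia.
  by have [-> | _] := eqVneq l j; [lia | apply: fixl].
rewrite /add_cap eqxx ifN_eq; last lia.
split=> // [j' | l].
  have [-> | _] := eqVneq j' n; first lia.
  have [-> | _] := eqVneq j' j; first lia.
  by case/andP=> lt_j'j lt_jfj'; have [] := nc j' j lt_j'j lt_jfj'.
have [-> //| _] := eqVneq l n.
have [-> | nlj fl] := eqVneq l j; first lia.
have [lt_ln | ] := ltnP l n; last lia.
by have := jonly l lt_ln fl; lia.
Qed.

Lemma diagram_last_fixed a n f mk : diagram a.+1 n f mk ->
  [/\ last_fixed n f < n, f (last_fixed n f) = last_fixed n f & ~~ mk (last_fixed n f)].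
Proof.
move=> D; have [_ _ fc _ _] := D; have [|lt_jn fj _] := @last_fixedP n f; first by rewrite fc.
by split=> //; apply: diagram_unmarked_fixed D fj.
Qed.

Lemma diagram_add_cap a n f mk (b : bool) : diagram a.+1 n f mk -> (b -> a = 0) ->
  let j := last_fixed n f in diagram a n.+1 (add_cap n f j) (add_mark j b mk).
Proof.
move=> [fK fn fc nc lm] ba j; have [|lt_jn fj jlast] := @last_fixedP n f; first by rewrite fc.
have capfix : fixcount n.+1 (add_cap n f j) = a.
  by apply/eqP; rewrite -eqSS -fc -fixcount_add_cap.
split=> //.
- by apply: involutive_add_cap => //; apply: fn.
- exact: fixed_beyond_add_cap.
- exact: noncrossing_add_cap.
apply: leftmost_marks_add_cap => // /ba a0 l lt_ln fl; apply/eqP/negP => nlj.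
move: capfix; rewrite a0 => /eqP/fixcount_eq0P/(_ l (ltnW lt_ln)); apply.
by rewrite /add_cap !ifN_eq //; lia.
Qed.

Definition drop_cap n (g : nat -> nat) i := if (i == n) || (i == g n) then i else g i.

Definition drop_mark n (g : nat -> nat) (mk : nat -> bool) i := mk i && (i != g n).

Lemma drop_cap_id n g i : (i == n) || (i == g n) -> drop_cap n g i = i.
Proof. by rewrite /drop_cap => ->. Qed.

Lemma drop_capE n g i : i != n -> i != g n -> drop_cap n g i = g i.
Proof. by rewrite /drop_cap => /negbTE -> /negbTE ->. Qed.

Lemma involutive_drop_cap n g : involutive g -> involutive (drop_cap n g).
Proof.
move=> gK i; have [fix_i | /norP [ni ngi]] := boolP ((i == n) || (i == g n)).
  by rewrite !drop_cap_id.
have gin : (g i == n) = (i == g n) by rewrite -(inj_eq (inv_inj gK)) gK.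
rewrite /drop_cap (negbTE ni) (negbTE ngi) /= gin (inj_eq (inv_inj gK)).
by rewrite (negbTE ni) (negbTE ngi) gK.
Qed.

Lemma fixed_beyond_drop_cap n g : fixed_beyond n.+1 g -> fixed_beyond n (drop_cap n g).
Proof.
move=> gn i le_ni; rewrite /drop_cap; case: ifP => // /norP [ni _].
by apply: gn; lia.
Qed.

Lemma fixcount_drop_cap n g : involutive g -> g n < n ->
  fixcount n (drop_cap n g) = (fixcount n.+1 g).+1.
Proof.
move=> gK lt_gnn; rewrite fixcountS (ltn_eqF lt_gnn) addn0.
apply: (fixcount_unfix lt_gnn) => [i lt_in /eqP ngi||]; rewrite ?gK.
- by rewrite drop_capE //; lia.
- by rewrite drop_cap_id // eqxx orbT.
- lia.
Qed.

Lemma noncrossing_drop_cap n g : involutive g -> fixed_beyond n.+1 g -> noncrossing g ->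
  noncrossing (drop_cap n g).
Proof.
move=> gK gn nc i l lt_il.
have [fix_i | /norP [ni ngi]] := boolP ((i == n) || (i == g n)).
  by rewrite drop_cap_id //; lia.
rewrite (drop_capE ni ngi) => lt_lgi; have [ngl lt_igl lt_glgi] := nc i l lt_il lt_lgi.
have lt_in1 : i < n.+1 by rewrite ltnNge; apply/negP => /gn; lia.
have lt_gin1 := fixed_beyond_lt gK gn lt_in1.
have ngin : g i != n by apply: contraNneq ngi => <-; rewrite gK.
by rewrite drop_capE //; [lia | apply: contraTneq lt_glgi => ->; rewrite gK; lia].
Qed.

Lemma leftmost_marks_drop_cap n g mk : involutive g -> fixed_beyond n.+1 g ->
  leftmost_marks g mk -> leftmost_marks (drop_cap n g) (drop_mark n g mk).
Proof.
move=> gK gn lm i /andP [/lm [lt_igi noin fixl] ngi].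
have lt_in1 : i < n.+1 by rewrite ltnNge; apply/negP => /gn; lia.
have lt_gin1 := fixed_beyond_lt gK gn lt_in1.
have ni : i != n by lia.
rewrite drop_capE //; split=> // [j | l].
  have [fix_j | /norP [nj ngj]] := boolP ((j == n) || (j == g n)).
    by rewrite drop_cap_id //; lia.
  by rewrite drop_capE //; apply: noin.
have [fix_l | /norP [nl ngl]] := boolP ((l == n) || (l == g n)); last first.
  by rewrite drop_capE //; apply: fixl.
case/orP: fix_l => /eqP -> _; first lia.
rewrite ltn_neqAle ngi leqNgt; apply/negP => lt_gni.
by apply: (noin (g n)); rewrite gK; lia.
Qed.

Lemma last_fixed_drop_cap n g : involutive g -> noncrossing g -> g n < n ->
  last_fixed n (drop_cap n g) = g n.
Proof.
move=> gK nc lt_gnn; apply: last_fixed_eq => //; first by rewrite drop_cap_id // eqxx orbT.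
move=> l /andP [lt_gnl lt_ln]; rewrite drop_capE; try lia.
by have [] := nc (g n) l lt_gnl; rewrite gK.
Qed.

Lemma diagram_cap_lt a n g mk : diagram a n.+1 g mk -> g n <> n -> g n < n.
Proof. by case=> gK gn _ _ _ ngn; have := fixed_beyond_lt gK gn (ltnSn n); lia. Qed.

Lemma diagram_drop_cap a n g mk : diagram a n.+1 g mk -> g n <> n ->
  diagram a.+1 n (drop_cap n g) (drop_mark n g mk).
Proof.
move=> D /(diagram_cap_lt D) lt_gnn; case: D => gK gn gc nc lm; split.
- exact: involutive_drop_cap.
- exact: fixed_beyond_drop_cap.
- by rewrite fixcount_drop_cap // gc.
- exact: noncrossing_drop_cap.
- exact: leftmost_marks_drop_cap.
Qed.

Lemma diagram_marked_cap a n g mk : diagram a n.+1 g mk -> g n <> n -> mk (g n) -> a = 0.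
Proof.
case=> gK _ gc nc lm ngn /lm [_ _ fixl]; rewrite -gc; apply/eqP/fixcount_eq0P => l lt_ln1 gl.
have nl : l <> n by move=> eln; subst l.
have lt_lggn : l < g (g n) by rewrite gK; lia.
by have [] := nc (g n) l (fixl l gl) lt_lggn.
Qed.

Lemma eq_add_cap n f f' j : f =1 f' -> add_cap n f j =1 add_cap n f' j.
Proof. by move=> ff' i; rewrite /add_cap ff'. Qed.

Lemma eq_drop_cap n g g' : g =1 g' -> drop_cap n g =1 drop_cap n g'.
Proof. by move=> gg' i; rewrite /drop_cap !gg'. Qed.

Lemma eq_add_mark j b mk mk' : mk =1 mk' -> add_mark j b mk =1 add_mark j b mk'.
Proof. by move=> mkE i; rewrite /add_mark mkE. Qed.

Lemma eq_drop_mark n g g' mk mk' : g =1 g' -> mk =1 mk' -> drop_mark n g mk =1 drop_mark n g' mk'.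
Proof. by move=> gg' mkE i; rewrite /drop_mark gg' mkE. Qed.

Lemma add_drop_cap n g : involutive g -> add_cap n (drop_cap n g) (g n) =1 g.
Proof.
move=> gK i; rewrite /add_cap; have [-> // | ni] := eqVneq i n.
by have [-> | ngi] := eqVneq i (g n); [rewrite gK | rewrite drop_capE].
Qed.

Lemma drop_add_cap n f j : f n = n -> f j = j -> drop_cap n (add_cap n f j) =1 f.
Proof.
move=> fn fj i; rewrite /drop_cap add_cap_last.
have [-> // | ni] := eqVneq i n; have [-> // | nij] := eqVneq i j.
by rewrite /add_cap (negbTE ni) (negbTE nij).
Qed.

Lemma add_drop_mark n g mk : add_mark (g n) (mk (g n)) (drop_mark n g mk) =1 mk.
Proof.
move=> i; rewrite /add_mark /drop_mark.
by have [-> | _] := eqVneq i (g n); rewrite ?andbF ?andbT ?orbF.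
Qed.

Lemma drop_add_mark n f j b mk : ~~ mk j -> drop_mark n (add_cap n f j) (add_mark j b mk) =1 mk.
Proof.
move=> nmj i; rewrite /drop_mark /add_mark add_cap_last.
by have [-> | _] := eqVneq i j; rewrite ?(negbTE nmj) ?andbF ?andbT ?orbF.
Qed.

(** * Boundaries as permutations with mark sets *)

Section Boundary.

Variable n : nat.

Definition boundary := ({perm 'I_n} * {set 'I_n})%type.

Definition perm_nat (p : {perm 'I_n}) i := if insub i is Some j then val (p j) else i.

Definition set_nat (m : {set 'I_n}) i := if insub i is Some j then j \in m else false.

Lemma perm_nat_ord p (j : 'I_n) : perm_nat p j = p j.
Proof. by rewrite /perm_nat valK. Qed.

Lemma set_nat_ord m (j : 'I_n) : set_nat m j = (j \in m).
Proof. by rewrite /set_nat valK. Qed.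

Lemma perm_nat_fixed_beyond p : fixed_beyond n (perm_nat p).
Proof. by move=> i le_ni; rewrite /perm_nat insubN // -leqNgt. Qed.

Lemma perm_nat_lt p i : i < n -> perm_nat p i < n.
Proof. by move=> lt_in; rewrite -[i]/(val (Ordinal lt_in)) perm_nat_ord. Qed.

Lemma set_nat_lt m i : set_nat m i -> i < n.
Proof. by rewrite /set_nat; case: insubP. Qed.

Lemma involutive_permP p : reflect (involutive (perm_nat p)) [forall i, p (p i) == i].
Proof.
apply: (iffP forallP) => [pK i | pK i].
  have [lt_in | le_ni] := ltnP i n; last by rewrite !perm_nat_fixed_beyond.
  by rewrite -[i]/(val (Ordinal lt_in)) !perm_nat_ord (eqP (pK _)).
by apply/eqP/val_inj; rewrite /= -!perm_nat_ord pK.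
Qed.

Lemma fixcount_perm_nat p : fixcount n (perm_nat p) = #|[set i | p i == i]|.
Proof.
rewrite /fixcount -val_enum_ord count_map cardsE cardE size_filter -enumT.
by apply: eq_count => i; rewrite /= perm_nat_ord.
Qed.

Lemma noncrossing_permP p :
  reflect (noncrossing (perm_nat p))
    [forall i : 'I_n, forall l : 'I_n, ((i < l)%N && (l < p i)%N) ==>
                        [&& p l != l, (i < p l)%N & (p l < p i)%N]].
Proof.
apply: (iffP forallP) => [nc i l lt_il lt_lpi | nc i].
  have lt_in : i < n by rewrite ltnNge; apply/negP => /(perm_nat_fixed_beyond p) pi; lia.
  have lt_ln : l < n by have := perm_nat_lt p lt_in; lia.
  move: lt_il lt_lpi; rewrite -[i]/(val (Ordinal lt_in)) -[l]/(val (Ordinal lt_ln)).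
  rewrite !perm_nat_ord => lt_il lt_lpi.
  have /forallP/(_ (Ordinal lt_ln)) := nc (Ordinal lt_in).
  by rewrite lt_il lt_lpi => /and3P [/eqP npl ? ?]; split=> // /val_inj.
apply/forallP => l; apply/implyP => /andP [lt_il lt_lpi].
have := nc i l lt_il; rewrite !perm_nat_ord => /(_ lt_lpi) [npl ? ?].
by apply/and3P; split=> //; apply: contra_not_neq npl => ->.
Qed.

Lemma leftmost_marks_permP p m :
  reflect (leftmost_marks (perm_nat p) (set_nat m))
    [forall i in m, [&& (i < p i)%N,
                        [forall j : 'I_n, ~~ ((j < i)%N && (i < p j)%N)]
                      & [forall l : 'I_n, (p l == l) ==> (i < l)%N]]].
Proof.
apply: (iffP forallP) => [lm i mi | lm i].
  have lt_in := set_nat_lt mi; move: mi; rewrite -[i]/(val (Ordinal lt_in)) set_nat_ord => mi.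
  have /implyP/(_ mi)/and3P [lt_ipi /forallP noin /forallP fixl] := lm (Ordinal lt_in).
  rewrite perm_nat_ord; split=> // [j | l].
    have [lt_jn | le_nj] := ltnP j n; last by rewrite perm_nat_fixed_beyond //; lia.
    by rewrite -[j]/(val (Ordinal lt_jn)) perm_nat_ord; apply/negP/noin.
  have [lt_ln | le_nl] := ltnP l n; last by move=> _ /=; lia.
  rewrite -[l]/(val (Ordinal lt_ln)) perm_nat_ord => pl.
  by apply: (implyP (fixl (Ordinal lt_ln))); apply/eqP/val_inj.
apply/implyP => mi; have := lm i; rewrite set_nat_ord => /(_ mi) [lt_ipi noin fixl].
apply/and3P; split; first by rewrite -perm_nat_ord.
  by apply/forallP => j; apply/negP; rewrite -!perm_nat_ord; apply: noin.
by apply/forallP => l; apply/implyP => /eqP pl; apply: fixl; rewrite perm_nat_ord pl.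
Qed.

Lemma boundary_eq (x y : boundary) :
  perm_nat x.1 =1 perm_nat y.1 -> set_nat x.2 =1 set_nat y.2 -> x = y.
Proof.
case: x y => p m [p' m'] /= pE mE; congr pair.
  by apply/permP => j; apply: val_inj; have := pE j; rewrite !perm_nat_ord.
by apply/setP => j; rewrite -!set_nat_ord mE.
Qed.

Lemma monic_markedP a (x : boundary) :
  reflect (diagram a n (perm_nat x.1) (set_nat x.2)) (monic_marked a n x).
Proof.
case: x => p m; rewrite /monic_marked /= -fixcount_perm_nat.
apply: (iffP and4P) => [[/involutive_permP ? /eqP ? /noncrossing_permP ?] | ].
  by move/leftmost_marks_permP; split=> //; apply: perm_nat_fixed_beyond.
case=> /involutive_permP ? _ /eqP ? /noncrossing_permP ? /leftmost_marks_permP ?.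
by split.
Qed.

(* The identity is a junk value, used only when f does not restrict to 'I_n. *)
Definition mkperm (f : nat -> nat) : {perm 'I_n} :=
  if injectiveP (fun i : 'I_n => insubd i (f i)) is ReflectT f_inj then perm f_inj else 1%g.

Lemma perm_nat_mkperm f : involutive f -> fixed_beyond n f -> perm_nat (mkperm f) =1 f.
Proof.
move=> fK fn i; have [lt_in | le_ni] := ltnP i n; last by rewrite perm_nat_fixed_beyond ?fn.
have f_lt := fixed_beyond_lt fK fn.
have f_inj : injective (fun i : 'I_n => insubd i (f i)).
  by move=> j k /(congr1 val); rewrite !val_insubd !f_lt // => /(inv_inj fK)/val_inj.
rewrite /mkperm; case: injectiveP => [inj | /(_ f_inj) //].
by rewrite -[i]/(val (Ordinal lt_in)) perm_nat_ord permE /= val_insubd f_lt.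
Qed.

Lemma set_nat_mkset (mk : nat -> bool) :
  (forall i, mk i -> i < n) -> set_nat [set i : 'I_n | mk i] =1 mk.
Proof.
move=> mk_lt i; rewrite /set_nat; case: insubP => [j _ <- | lt_in]; first by rewrite inE.
by apply/esym/negP => /mk_lt; apply/negP.
Qed.

Definition encode f mk : boundary := (mkperm f, [set i : 'I_n | mk i]).

Lemma encode_spec a f mk : diagram a n f mk ->
  [/\ monic_marked a n (encode f mk), perm_nat (encode f mk).1 =1 f
    & set_nat (encode f mk).2 =1 mk].
Proof.
move=> D; have [fK fn _ _ _] := D.
have pE := perm_nat_mkperm fK fn.
have mE : set_nat [set i : 'I_n | mk i] =1 mk.
  by apply: set_nat_mkset => i; apply: diagram_marked_lt D.
by split=> //; apply/monic_markedP; apply: eq_diagram D.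
Qed.

End Boundary.

(** * Counting *)

Definition diagrams a n := [set x : boundary n | monic_marked a n x].

Definition recode m n (x : boundary n) : boundary m := encode (perm_nat x.1) (set_nat x.2).
Arguments recode m {n} x.

Definition through_last n := [set y : boundary n.+1 | perm_nat y.1 n == n].

Lemma recodeK m a a' n (x : boundary n) :
  diagram a n (perm_nat x.1) (set_nat x.2) -> diagram a' m (perm_nat x.1) (set_nat x.2) ->
  recode n (recode m x) = x.
Proof.
move=> Dn /encode_spec [_ pE mE].
have /encode_spec [_ pE' mE'] := eq_diagram (fsym pE) (fsym mE) Dn.
by apply: boundary_eq => i; rewrite ?pE' ?pE ?mE' ?mE.
Qed.

Lemma card_through_last a n : #|diagrams a.+1 n.+1 :&: through_last n| = #|diagrams a n|.
Proof.
symmetry; apply: (card_in_bij (f := recode n.+1) (g := recode n)) => [x | y | x | y].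
- rewrite !inE => /monic_markedP/diagram_widen/encode_spec [-> pE _].
  by rewrite pE perm_nat_fixed_beyond /=.
- rewrite !inE => /andP [/monic_markedP D /eqP yn].
  by have [_ /encode_spec []] := diagram_narrow D yn.
- by rewrite inE => /monic_markedP D; apply: recodeK D (diagram_widen D).
- rewrite !inE => /andP [/monic_markedP D /eqP yn].
  by have [_ D'] := diagram_narrow D yn; apply: recodeK D D'.
Qed.

Definition cap_last n (b : bool) :=
  [set y : boundary n.+1 | (perm_nat y.1 n != n) && (set_nat y.2 (perm_nat y.1 n) == b)].

Definition extend_cap n (b : bool) (x : boundary n) : boundary n.+1 :=
  let j := last_fixed n (perm_nat x.1) in
  encode (add_cap n (perm_nat x.1) j) (add_mark j b (set_nat x.2)).

Definition restrict_cap n (y : boundary n.+1) : boundary n :=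
  encode (drop_cap n (perm_nat y.1)) (drop_mark n (perm_nat y.1) (set_nat y.2)).

Lemma card_cap_last a n (b : bool) : (b -> a = 0) ->
  #|diagrams a n.+1 :&: cap_last n b| = #|diagrams a.+1 n|.
Proof.
move=> ba; symmetry.
apply: (card_in_bij (f := extend_cap b) (g := @restrict_cap n)) => [x | y | x | y].
- rewrite inE => /monic_markedP D; have [lt_jn _ nmj] := diagram_last_fixed D.
  have /encode_spec [mm pE mE] := diagram_add_cap D ba.
  by rewrite !inE mm pE mE add_cap_last (ltn_eqF lt_jn) /add_mark (negbTE nmj) eqxx andbT /=.
- rewrite !inE => /and3P [/monic_markedP D /eqP ngn _].
  by have /encode_spec [] := diagram_drop_cap D ngn.
- rewrite inE => /monic_markedP D; have [lt_jn fj nmj] := diagram_last_fixed D.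
  have DA := diagram_add_cap D ba; have /encode_spec [_ pE mE] := DA.
  have ngn : perm_nat (extend_cap b x).1 n <> n by rewrite pE add_cap_last; lia.
  have /encode_spec [_ pE' mE'] := diagram_drop_cap (eq_diagram (fsym pE) (fsym mE) DA) ngn.
  apply: boundary_eq => i; rewrite ?pE' ?mE'.
    by rewrite (eq_drop_cap n pE) drop_add_cap // perm_nat_fixed_beyond.
  by rewrite (eq_drop_mark n pE mE) drop_add_mark.
- rewrite !inE => /and3P [/monic_markedP D /eqP ngn /eqP mb].
  have [gK _ _ nc _] := D; have lt_gnn := diagram_cap_lt D ngn.
  have DR := diagram_drop_cap D ngn; have /encode_spec [_ pE mE] := DR.
  have DR' := eq_diagram (fsym pE) (fsym mE) DR.
  have jE : last_fixed n (perm_nat (restrict_cap y).1) = perm_nat y.1 n.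
    by rewrite (eq_last_fixed (fun i _ => pE i)) last_fixed_drop_cap.
  have /encode_spec [_ pE' mE'] := diagram_add_cap DR' ba.
  apply: boundary_eq => i; rewrite ?pE' ?mE' jE.
    by rewrite (eq_add_cap n _ pE) add_drop_cap.
  by rewrite -mb (eq_add_mark _ _ mE) add_drop_mark.
Qed.

Lemma card_through_last0 n : #|diagrams 0 n.+1 :&: through_last n| = 0.
Proof.
apply: eq_card0 => y; rewrite !inE; apply/negP => /andP [/monic_markedP D /eqP yn].
by have [] := diagram_narrow D yn.
Qed.

Lemma card_marked_cap_last a n : #|diagrams a.+1 n.+1 :&: cap_last n true| = 0.
Proof.
apply: eq_card0 => y; rewrite !inE; apply/negP => /and3P [/monic_markedP D /eqP ngn /eqP mk].
by have := diagram_marked_cap D ngn mk.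
Qed.

Lemma card_diagrams_split a n : #|diagrams a n.+1| =
  #|diagrams a n.+1 :&: through_last n| + #|diagrams a n.+1 :&: cap_last n true|
  + #|diagrams a n.+1 :&: cap_last n false|.
Proof.
rewrite -(cardsID (through_last n)) -addnA -(cardsID (cap_last n true) (_ :\: _)).
by congr (_ + (_ + _)); apply: eq_card => y; rewrite !inE;
  case: (_ == n); case: (set_nat _ _); rewrite ?andbF ?andbT.
Qed.

Lemma card_diagrams0S n : #|diagrams 0 n.+1| = #|diagrams 1 n| + #|diagrams 1 n|.
Proof. by rewrite card_diagrams_split card_through_last0 !card_cap_last. Qed.

Lemma card_diagramsSS a n : #|diagrams a.+1 n.+1| = #|diagrams a n| + #|diagrams a.+2 n|.
Proof.
by rewrite card_diagrams_split card_through_last card_marked_cap_last card_cap_last ?addn0.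
Qed.

Lemma card_diagrams_gt a n : n < a -> #|diagrams a n| = 0.
Proof.
move=> lt_na; apply: eq_card0 => x; rewrite inE; apply/negP => /monic_markedP [_ _ fc _ _].
by have := fixcount_le n (perm_nat x.1); rewrite fc; lia.
Qed.

Lemma card_diagrams00 : #|diagrams 0 0| = 1.
Proof.
have unit0 (x : boundary 0) : x = (1%g, set0).
  by apply: boundary_eq => i; rewrite /perm_nat /set_nat insubN.
apply: (@eq_card1 _ (1%g, set0)) => x; rewrite [x]unit0 !inE eqxx.
apply/monic_markedP; have fb := perm_nat_fixed_beyond (1%g : {perm 'I_0}).
split=> // [i | i l lt_il | i]; first by rewrite !fb.
  by rewrite fb //; lia.
by rewrite /set_nat insubN.
Qed.

Lemma card_diagrams n a k : a + 2 * k = n -> #|diagrams a n| = 'C(n, k).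
Proof.
elim: n a k => [|n IHn] [|a] [|k] //= akn; try lia.
- by rewrite card_diagrams00.
- have binC : 'C(n, k.+1) = 'C(n, k) by rewrite -bin_sub; [congr 'C(_, _) | ]; lia.
  by rewrite card_diagrams0S (IHn 1 k) ?binS ?binC //; lia.
- by rewrite card_diagramsSS (IHn a 0) ?card_diagrams_gt ?bin0 //; lia.
- by rewrite card_diagramsSS (IHn a k.+1) ?(IHn a.+2 k) ?binS //; lia.
Qed.

Lemma dim_cellW (K : fieldType) t n :
  \dim (fullv : {vspace cellW K t n}) = #|diagrams (absz t) n|.
Proof. by rewrite dimvf /dim /= muln1 card_sig cardsE. Qed.

Theorem proposition5p5 (K : fieldType) (t : int) (k : nat) :
  \dim (fullv : {vspace cellW K t (absz t + 2 * k)%N}) = 'C(absz t + 2 * k, k).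
Proof. by rewrite dim_cellW (@card_diagrams _ (absz t) k). Qed.
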